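(* For all $n\geq 3$, the center of $\mathcal{BR}(\mathfrak{S}_n)$ equals the submonoid $\{(1,J)\mid J \text{ boxed}\}$ generated by $e_1,\dots,e_{n-1}$, which is isomorphic to the monoid $\mathcal{C}_n$ of compositions of $n$.
   Context: $\mathfrak{C}_n$ is the partition monoid: set partitions of $[2n]$ (top points $1,\dots,n$, bottom points $n+1,\dots,2n$) with concatenation product. $I\preceq J$ means each block of $J$ is a union of blocks of $I$. $\mathfrak{S}_n\subseteq\mathfrak{C}_n$ consists of the partitions with all blocks of the form $\{i,n+j\}$; $1=\{\{i,n+i\}\}$. A set partition $J$ of $[2n]$ is boxed if $1\preceq J$ and the restriction of $J$ to $[n]$ has all blocks intervals. $\mathcal{BR}(\mathfrak{S}_n)$ is the set of pairs $(I,J)$ with $I\in\mathfrak{S}_n$, $J$ boxed, $I\preceq J$, with componentwise concatenation product. $e_i=(1,b_i)$, where $b_i$ merges the blocks $\{i,n+i\}$ and $\{i+1,n+i+1\}$ of $1$. $\mathcal{C}_n$ is the set of compositions of $n$ with positive parts, with product the finest common coarsening (join), where $\mu$ is finer than $\mu'$ if $\mu'$ is obtained by adding consecutive parts of $\mu$; boxed partitions correspond to compositions via the sizes of their blocks halved. *)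

From mathcomp Require Import all_boot.
Set Implicit Arguments. Unset Strict Implicit. Unset Printing Implicit Defensive.

(* Points of [2n]: top point i (paper: i+1) is [inl i], bottom point i
   (paper: n+i+1) is [inr i], for i : 'I_n (0-based). *)
Definition pt (n : nat) : finType := ('I_n + 'I_n)%type.

Definition part (n : nat) := {set {set pt n}}.

Definition is_setpart n (P : part n) : bool := partition P [set: pt n].

Definition pidx n (x : pt n) : 'I_n := match x with inl i => i | inr i => i end.

(* Concatenation: P on top, Q below; the bottom row of P is glued to the top
   row of Q.  Points of the three-layer diagram are (i, layer). *)
Definition layer n : finType := ('I_n * 'I_3)%type.
Definition l0 : 'I_3 := @Ordinal 3 0 isT.
Definition l1 : 'I_3 := @Ordinal 3 1 isT.
Definition l2 : 'I_3 := @Ordinal 3 2 isT.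
Definition emb_up n (x : pt n) : layer n :=
  match x with inl i => (i, l0) | inr i => (i, l1) end.
Definition emb_down n (x : pt n) : layer n :=
  match x with inl i => (i, l1) | inr i => (i, l2) end.
Definition emb_out n (x : pt n) : layer n :=
  match x with inl i => (i, l0) | inr i => (i, l2) end.

Definition glue_rel n (P Q : part n) : rel (layer n) := fun u v =>
  [exists B in P, exists a in B, exists b in B,
      (emb_up a == u) && (emb_up b == v)] ||
  [exists B in Q, exists a in B, exists b in B,
      (emb_down a == u) && (emb_down b == v)].

Definition pmul n (P Q : part n) : part n :=
  [set [set y | connect (glue_rel P Q) (emb_out x) (emb_out y)] | x : pt n].

Definition pfiner n (I J : part n) : Prop :=
  forall B, B \in J -> B = \bigcup_(A in I | A \subset B) A.

Definition pone n : part n := [set [set inl i; inr i] | i : 'I_n].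

Definition in_Sn n (P : part n) : Prop :=
  is_setpart P /\ forall B, B \in P -> exists i j : 'I_n, B = [set inl i; inr j].

Definition boxed n (J : part n) : Prop :=
  [/\ is_setpart J, pfiner (pone n) J &
      forall B, B \in J -> forall i j k : 'I_n, i <= j <= k ->
        inl i \in B -> inl k \in B -> inl j \in B].

Definition BR n (x : part n * part n) : Prop :=
  [/\ in_Sn x.1, boxed x.2 & pfiner x.1 x.2].

Definition brmul n (x y : part n * part n) : part n * part n :=
  (pmul x.1 y.1, pmul x.2 y.2).

Definition brone n : part n * part n := (pone n, pone n).

(* b_i (paper index 1 <= i <= n-1) merges the blocks {i, n+i} and
   {i+1, n+i+1} of 1; with 0-based indices these are the indices i-1 and i. *)
Definition bgen n (i : nat) : part n :=
  [set [set inl j; inr j] | j : 'I_n & (val j != i.-1) && (val j != i)] :|: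
  [set [set x : pt n | (val (pidx x) == i.-1) || (val (pidx x) == i)]].

Definition egen n (i : nat) : part n * part n := (pone n, bgen n i).

Definition composition (n : nat) (mu : seq nat) : Prop :=
  all (fun k => 0 < k) mu /\ sumn mu = n.

(* mu' is obtained from mu by adding consecutive parts. *)
Definition coarser (mu mu' : seq nat) : Prop :=
  exists r : seq nat, [/\ all (fun k => 0 < k) r, sumn r = size mu &
                           mu' = [seq sumn s | s <- reshape r mu]].

Definition is_join (mu nu rho : seq nat) : Prop :=
  [/\ coarser mu rho, coarser nu rho &
      forall tau, coarser mu tau -> coarser nu tau -> coarser rho tau].

From mathcomp Require Import all_boot zify fingroup perm.
Set Implicit Arguments. Unset Strict Implicit. Unset Printing Implicit Defensive.

(* Every diagram needed here is the kernel partition of a labelling of the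
   2n points: an element of S_n is the kernel of i |-> g i on the top row and
   j |-> j on the bottom row, a boxed partition the kernel of "number of cuts
   to the left of the column".  Products of kernels are computed by labelling
   the three layers of the glued diagram consistently.  Thus every element of
   BR(S_n) is (g, J) with J boxed, boxed partitions multiply by uniting their
   merged adjacent pairs (so they commute and (1, J) is central), and if (g, J)
   commutes with (s, [2n]) for every permutation s then g is central in S_n,
   hence trivial for n >= 3.  Recording which adjacent columns are merged
   identifies boxed partitions with bit strings of length n-1, that is with
   compositions of n, and the union of merged pairs with their join. *)

Section KernelPartitions.
Variable n : nat.
Implicit Types (P Q : part n) (R : rel (pt n)).

Definition classes R : part n := [set [set y | R x y] | x : pt n].

Definition ker_part (T : eqType) (p : pt n -> T) : part n :=
  classes (fun x y => p x == p y).

Lemma eq_classes R R' : R =2 R' -> classes R = classes R'.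
Proof.
by move=> eqR; apply: eq_imset => x; apply/setP => y; rewrite !inE eqR.
Qed.

Lemma eq_ker_part (T U : eqType) (p : pt n -> T) (q : pt n -> U) :
  (forall x y, (p x == p y) = (q x == q y)) -> ker_part p = ker_part q.
Proof. exact: eq_classes. Qed.

Lemma ker_part_setpart (T : eqType) (p : pt n -> T) : is_setpart (ker_part p).
Proof.
have -> : ker_part p = equivalence_partition [rel x y | p x == p y] [set: pt n].
  apply/setP => B; apply/imsetP/imsetP => -[x _ ->]; exists x => //;
    by apply/setP => y; rewrite !inE.
apply: equivalence_partitionP => x y z _ _ _ /=.
by split=> // /eqP ->.
Qed.

Lemma pblock_ker_part (T : eqType) (p : pt n -> T) x :
  pblock (ker_part p) x = [set y | p x == p y].
Proof.
have [_ tiP _] := and3P (ker_part_setpart p).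
by apply: def_pblock; rewrite ?inE ?imset_f.
Qed.

Lemma ker_part_inj (T U : eqType) (p : pt n -> T) (q : pt n -> U) x y :
  ker_part p = ker_part q -> (p x == p y) = (q x == q y).
Proof.
by move/(congr1 (fun P => y \in pblock P x)); rewrite /= !pblock_ker_part !inE.
Qed.

Lemma setpart_cover P x : is_setpart P -> x \in cover P.
Proof. by case/and3P => /eqP -> _ _; rewrite inE. Qed.

Lemma setpart_ker_pblock P : is_setpart P -> P = ker_part (pblock P).
Proof.
move=> hP; rewrite -{1}(equivalence_partition_pblock hP).
have [_ tiP _] := and3P hP.
apply/setP => B; apply/imsetP/imsetP => -[x _ ->]; exists x => //;
  by apply/setP => y; rewrite !inE eq_pblock // setpart_cover.
Qed.

End KernelPartitions.

Section Gluing.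
Variable n : nat.

Lemma glue_up (T : eqType) (p : pt n -> T) (Q : part n) a b :
  p a = p b -> glue_rel (ker_part p) Q (emb_up a) (emb_up b).
Proof.
move=> pab; apply/orP; left; apply/existsP; exists [set y | p a == p y].
rewrite imset_f //=; apply/existsP; exists a; rewrite inE eqxx /=.
by apply/existsP; exists b; rewrite inE pab !eqxx.
Qed.

Lemma glue_down (T : eqType) (q : pt n -> T) (P : part n) a b :
  q a = q b -> glue_rel P (ker_part q) (emb_down a) (emb_down b).
Proof.
move=> qab; apply/orP; right; apply/existsP; exists [set y | q a == q y].
rewrite imset_f //=; apply/existsP; exists a; rewrite inE eqxx /=.
by apply/existsP; exists b; rewrite inE qab !eqxx.
Qed.

Lemma connect_glue_sym (P Q : part n) : connect_sym (glue_rel P Q).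
Proof.
apply: sym_connect_sym.
suff glue_rev u v : glue_rel P Q u v -> glue_rel P Q v u.
  by move=> u v; apply/idP/idP => /glue_rev.
case/orP => /existsP [B /andP [PB /existsP [a /andP [Ba /existsP [b /andP [Bb uv]]]]]];
  apply/orP; [left | right]; apply/existsP; exists B; rewrite PB /=;
  apply/existsP; exists b; rewrite Bb /=; apply/existsP; exists a;
  by rewrite Ba /= andbC.
Qed.

Lemma connect_glue_ker (T U V : eqType) (p : pt n -> T) (q : pt n -> U)
    (K : layer n -> V) u v :
  (forall a b, p a = p b -> K (emb_up a) = K (emb_up b)) ->
  (forall a b, q a = q b -> K (emb_down a) = K (emb_down b)) ->
  connect (glue_rel (ker_part p) (ker_part q)) u v -> K u = K v.
Proof.
move=> Kup Kdown.
have edge w w' : glue_rel (ker_part p) (ker_part q) w w' -> K w = K w'.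
  case/orP => /existsP [_ /andP [/imsetP [x _ ->] /existsP [a /andP [+ /existsP
    [b /andP [+ /andP [/eqP <- /eqP <-]]]]]]];
    rewrite !inE => /eqP xa /eqP xb; [apply: Kup | apply: Kdown]; congruence.
case/connectP => s + ->; elim: s u => //= w s IH u /andP [/edge -> ].
exact: IH.
Qed.

End Gluing.

Section BlockIndex.
Implicit Types f g : nat -> bool.

(* [f k] means that [k] and [k.+1] lie in the same block, so counting the
   cuts below [i] numbers the block of [i]. *)
Fixpoint block_index (f : nat -> bool) (i : nat) : nat :=
  if i is i'.+1 then block_index f i' + ~~ f i' else 0.

Lemma block_index_le f i j : i <= j -> block_index f i <= block_index f j.
Proof.
elim: j => [|j IH]; first by rewrite leqn0 => /eqP ->.
by rewrite leq_eqVlt ltnS => /orP [/eqP -> //| /IH /=]; lia.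
Qed.

Lemma block_index_eqP f i j : i <= j ->
  reflect (forall k, i <= k < j -> f k) (block_index f i == block_index f j).
Proof.
move=> lij; apply: (iffP eqP).
  move=> eq_ij k /andP [ik kj].
  have := block_index_le f ik; have := block_index_le f kj.
  rewrite /=; case: (f k) => //=; lia.
elim: j lij => [|j IH]; first by rewrite leqn0 => /eqP ->.
rewrite leq_eqVlt ltnS => /orP [/eqP -> // | lij] fij /=.
rewrite fij ?lij //= addn0; apply: IH => // k /andP [ik kj].
by apply: fij; rewrite ik ltnW.
Qed.

Lemma block_index_mono f g i j : (forall k, f k -> g k) ->
  block_index f i = block_index f j -> block_index g i = block_index g j.
Proof.
move=> fg; wlog lij : i j / i <= j.
  move=> wlog_ij; case: (leqP i j) => [|/ltnW] lij; first exact: wlog_ij.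
  by move/esym/(wlog_ij _ _ lij)/esym.
move/eqP/(block_index_eqP f lij) => fij.
by apply/eqP/(block_index_eqP g lij) => k /fij /fg.
Qed.

Lemma eq_block_index f g m i : (forall k, k < m -> f k = g k) -> i <= m ->
  block_index f i = block_index g i.
Proof. by move=> fg; elim: i => //= i IH lim; rewrite IH ?fg //; lia. Qed.

Lemma block_index_false i : block_index (fun=> false) i = i.
Proof. by elim: i => //= i ->; rewrite addn1. Qed.

Lemma block_index_true i : block_index (fun=> true) i = 0.
Proof. by elim: i => //= i ->. Qed.

End BlockIndex.

Lemma ord_chain n (R : rel 'I_n) (i j : 'I_n) :
  reflexive R -> transitive R -> i <= j ->
  (forall k k' : 'I_n, i <= k -> k' <= j -> k' = k.+1 :> nat -> R k k') ->
  R i j.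
Proof.
move=> Rrefl Rtrans /subnKC; move: (j - i) => d.
elim: d j => [|d IH] j def_j step.
  by have -> : j = i by apply: val_inj; rewrite /= -def_j addn0.
have ltj : i + d < n by rewrite (leq_trans _ (ltn_ord j)) // -def_j addnS.
apply: (Rtrans (Ordinal ltj)).
  by apply: IH => // k k' ik /= k'l; apply: step => //; lia.
by apply: step => /=; lia.
Qed.

Section Diagrams.
Variable n : nat.
Implicit Types (P Q : part n) (g h : 'I_n -> 'I_n) (f : nat -> bool).

Lemma pmul_ker P Q (T : eqType) (r : pt n -> T) :
  (forall x y, connect (glue_rel P Q) (emb_out x) (emb_out y) = (r x == r y)) ->
  pmul P Q = ker_part r.
Proof. exact: eq_classes. Qed.

Definition perm_key g (x : pt n) : 'I_n :=
  match x with inl i => g i | inr j => j end.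

Definition perm_part g : part n := ker_part (perm_key g).

Lemma pmul_perm_part g h : pmul (perm_part g) (perm_part h) = perm_part (h \o g).
Proof.
apply: pmul_ker => x y; set e := glue_rel _ _.
have up_bottom a : connect e (emb_up a) (emb_down (inr (h (perm_key g a)))).
  have e1 : e (emb_up a) (emb_up (inr (perm_key g a))) by apply: glue_up.
  have e2 : e (emb_down (inl (perm_key g a))) (emb_down (inr (h (perm_key g a)))).
    exact: glue_down.
  exact: connect_trans (connect1 e1) (connect1 e2).
have out_bottom z : connect e (emb_out z) (emb_down (inr (perm_key (h \o g) z))).
  by case: z => [i|j]; [apply: (up_bottom (inl i)) | apply: connect0].
apply/idP/eqP => [|xy].
  pose K (u : layer n) := match val u.2 with 0 => h (g u.1) | 1 => h u.1 | _ => u.1 end.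
  have Kout z : K (emb_out z) = perm_key (h \o g) z by case: z.
  rewrite -!Kout; apply: connect_glue_ker => a b;
    by case: a; case: b => i j; rewrite /K /= => ->.
apply: connect_trans (out_bottom x) _; rewrite xy connect_glue_sym.
exact: out_bottom.
Qed.

Definition box_part f : part n := ker_part (fun x => block_index f (pidx x)).

Lemma connect_box_part_column f f' (j : 'I_n) :
  connect (glue_rel (box_part f) (box_part f')) (emb_up (inl j)) (emb_down (inl j)).
Proof. by apply/connect1; apply: (@glue_up _ _ _ _ (inl j) (inr j)). Qed.

Lemma connect_box_part_top f f' (i j : 'I_n) :
  i <= j -> (forall k, i <= k < j -> f k || f' k) ->
  connect (glue_rel (box_part f) (box_part f')) (emb_up (inl i)) (emb_up (inl j)).
Proof.
move=> lij merged_ij; set e := glue_rel _ _.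
apply: (@ord_chain _ (fun i j => connect e (emb_up (inl i)) (emb_up (inl j)))) => //.
- by move=> ? ? ?; apply: connect_trans.
move=> k k' ik k'j k'E.
have cut_free (c : nat -> bool) : c k -> block_index c k = block_index c k'.
  by move=> ck; rewrite k'E /= ck addn0.
have /orP [/cut_free fk | /cut_free f'k] : f k || f' k by apply: merged_ij; lia.
  exact/connect1/glue_up.
apply: connect_trans (connect_box_part_column _ _ k) _; rewrite connect_glue_sym.
apply: connect_trans (connect_box_part_column _ _ k') _.
exact/connect1/glue_down.
Qed.

Lemma pmul_box_part f f' :
  pmul (box_part f) (box_part f') = box_part (fun k => f k || f' k).
Proof.
set ff' := fun k => _; apply: pmul_ker => x y; set e := glue_rel _ _.
have out_top z : connect e (emb_out z) (emb_up (inl (pidx z))).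
  case: z => [i|j]; first exact: connect0.
  rewrite connect_glue_sym; apply: connect_trans (connect_box_part_column _ _ j) _.
  by apply/connect1; apply: (@glue_down _ _ _ _ (inl j) (inr j)).
apply/idP/eqP => [|xy].
  have out1 (z : pt n) : (emb_out z).1 = pidx z by case: z.
  have up1 (z : pt n) : (emb_up z).1 = pidx z by case: z.
  have down1 (z : pt n) : (emb_down z).1 = pidx z by case: z.
  rewrite -(out1 x) -(out1 y).
  apply: (connect_glue_ker (K := fun u : layer n => block_index ff' u.1)) => a b;
    rewrite ?up1 ?down1; apply: block_index_mono => k.
    by rewrite /ff' => ->.
  by rewrite /ff' => ->; rewrite orbT.
wlog lxy : x y xy / pidx x <= pidx y.
  move=> wlog_xy; case: (leqP (pidx x) (pidx y)) => [|/ltnW] lxy; first exact: wlog_xy.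
  by rewrite connect_glue_sym; apply: wlog_xy.
apply: connect_trans (out_top x) _; rewrite connect_glue_sym.
apply: connect_trans (out_top y) _; rewrite connect_glue_sym.
move/eqP/(block_index_eqP ff' lxy): xy => merged_xy.
exact: connect_box_part_top lxy merged_xy.
Qed.

End Diagrams.

Section SymmetricGroup.
Variable n : nat.
Implicit Types (P : part n) (g h : 'I_n -> 'I_n).

Lemma inl_eq (a b : 'I_n) : (inl a == inl b :> pt n) = (a == b). Proof. by []. Qed.
Lemma inr_eq (a b : 'I_n) : (inr a == inr b :> pt n) = (a == b). Proof. by []. Qed.
Lemma inl_inr_eq (a b : 'I_n) : (inl a == inr b :> pt n) = false. Proof. by []. Qed.
Lemma inr_inl_eq (a b : 'I_n) : (inr a == inl b :> pt n) = false. Proof. by []. Qed.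
Definition pt_eqE := (inl_eq, inr_eq, inl_inr_eq, inr_inl_eq).

Lemma pone_ker_pidx : pone n = ker_part (@pidx n).
Proof.
have blockE (x : pt n) : [set y | pidx x == pidx y] = [set inl (pidx x); inr (pidx x)].
  by apply/setP; case=> j; rewrite !inE !pt_eqE ?orbF eq_sym.
apply/setP => B; apply/imsetP/imsetP => -[x _ ->].
  by exists (inl x); rewrite ?blockE.
by exists (pidx x); rewrite ?blockE.
Qed.

Lemma pone_perm_part : pone n = perm_part id.
Proof. by rewrite pone_ker_pidx; apply: eq_ker_part; do 2!case. Qed.

Lemma pone_box_part : pone n = box_part n (fun=> false).
Proof.
by rewrite pone_ker_pidx; apply: eq_ker_part => x y; rewrite !block_index_false.
Qed.

Lemma perm_part_inj g h : perm_part g = perm_part h -> g =1 h.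
Proof.
move=> /ker_part_inj gh i.
by have := gh (inl i) (inr (g i)); rewrite /= eqxx => /esym/eqP.
Qed.

Lemma eq_perm_part g h : g =1 h -> perm_part g = perm_part h.
Proof. by move=> gh; apply: eq_ker_part; do 2!case=> ? /=; rewrite ?gh. Qed.

Lemma in_Sn_perm_part (s : {perm 'I_n}) : in_Sn (perm_part s).
Proof.
split=> [|_ /imsetP [x _ ->]]; first exact: ker_part_setpart.
exists ((s^-1)%g (perm_key s x)), (perm_key s x).
apply/setP; case=> j; rewrite !inE /= !pt_eqE ?orbF //.
by apply/eqP/eqP => ->; rewrite ?permK ?permKV.
Qed.

Lemma in_SnE P : in_Sn P -> exists g, P = perm_part g.
Proof.
case=> setP_P shapeP; have [_ tiP _] := and3P setP_P.
have in_block x : x \in pblock P x by rewrite mem_pblock setpart_cover.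
have blockP x : exists i j, pblock P x = [set inl i; inr j].
  by apply: shapeP; rewrite pblock_mem // setpart_cover.
have /fin_all_exists [g g_block] i : exists j, inr j \in pblock P (inl i).
  by have [a [b ab]] := blockP (inl i); exists b; rewrite ab !inE eqxx orbT.
pose B j := pblock P (inr j).
have B_inj : injective B.
  move=> j j' eqB; have [a [b ab]] := blockP (inr j).
  have := in_block (inr j'); have := in_block (inr j).
  by rewrite -[pblock P (inr j')]/(B j') -eqB /B ab !inE /= !pt_eqE => /eqP -> /eqP.
have pblockE x : pblock P x = B (perm_key g x).
  by case: x => [i|j] //=; rewrite /B (same_pblock tiP (g_block i)).
exists g; rewrite (setpart_ker_pblock setP_P); apply: eq_ker_part => x y.
by rewrite !pblockE (inj_eq B_inj).
Qed.

End SymmetricGroup.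

Section Boxed.
Variable n : nat.
Implicit Types (J : part n) (f : nat -> bool).

Lemma boxed_box_part f : boxed (box_part n f).
Proof.
split; first exact: ker_part_setpart.
  move=> _ /imsetP [x _ ->]; apply/setP => y; apply/idP/bigcupP => [xy|[A /andP [_]]].
    exists [set inl (pidx y); inr (pidx y)]; last by case: y {xy} => j; rewrite !inE eqxx ?orbT.
    rewrite (imset_f (fun i : 'I_n => [set inl i; inr i])) //=.
    apply/subsetP => z; move: xy; rewrite !inE => /eqP ->.
    by case/orP => /eqP ->.
  by move/subsetP; apply.
move=> _ /imsetP [x _ ->] i j k /andP [ij jk]; rewrite !inE /= => /eqP xi /eqP xk.
by apply/eqP; have := block_index_le f ij; have := block_index_le f jk; lia.
Qed.

Lemma pfiner_full P : is_setpart P -> pfiner P (box_part n (fun=> true)).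
Proof.
move=> /and3P [/eqP coverP _ _] _ /imsetP [x _ ->].
have -> : [set y | block_index (fun=> true) (pidx x) == block_index (fun=> true) (pidx y)]
    = [set: pt n] by apply/setP => y; rewrite !inE !block_index_true.
by rewrite -{1}coverP; apply: eq_bigl => A; rewrite subsetT andbT.
Qed.

Definition merged J (k : nat) : bool :=
  [exists a : 'I_n, exists b : 'I_n,
     [&& val a == k, val b == k.+1 & inl b \in pblock J (inl a)]].

Lemma merged_box_part f k : k.+1 < n -> merged (box_part n f) k = f k.
Proof.
move=> lt_k1n; have lt_kn : k < n by apply: ltnW.
have blockE (a : 'I_n) : pblock (box_part n f) (inl a) =
    [set y | block_index f a == block_index f (pidx y)] by exact: pblock_ker_part.
apply/existsP/idP => [[a /existsP [b /and3P [/eqP ak /eqP bk]]] | fk].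
  by rewrite blockE inE /= ak bk /=; case: (f k) => //=; lia.
exists (Ordinal lt_kn); apply/existsP; exists (Ordinal lt_k1n).
by rewrite !eqxx blockE inE /= fk addn0.
Qed.

Lemma eq_box_part f f' : (forall k, k < n.-1 -> f k = f' k) ->
  box_part n f = box_part n f'.
Proof.
move=> ff'; apply: eq_ker_part => x y.
have le_n1 (z : pt n) : pidx z <= n.-1 by have := ltn_ord (pidx z); lia.
by rewrite !(eq_block_index ff' (le_n1 _)).
Qed.

Lemma bgen_box_part i : 0 < i < n -> bgen n i = box_part n (pred1 i.-1).
Proof.
move=> /andP [i_gt0 lt_in]; set m := i.-1; have iE : i = m.+1 by rewrite /m; lia.
have block_indexE j : block_index (pred1 m) j = j - (m < j).
  by elim: j => //= j ->; rewrite eqn_leq; lia.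
pose near (j : 'I_n) := (val j == m) || (val j == i).
pose B0 := [set z : pt n | (val (pidx z) == i.-1) || (val (pidx z) == i)].
have blockE (x : pt n) :
    [set y | block_index (pred1 m) (pidx x) == block_index (pred1 m) (pidx y)] =
    if near (pidx x) then B0 else [set inl (pidx x); inr (pidx x)].
  apply/setP; case=> j; rewrite /B0 /near -/m; case: ifP => /=;
    rewrite !inE ?pt_eqE /= -?val_eqE /= !block_indexE; lia.
apply/setP => B; rewrite in_setU; apply/orP/imsetP => [[]|[x _ ->]].
- case/imsetP => j; rewrite inE => far_j ->; exists (inl j) => //.
  by rewrite blockE /near /= -/m (negbTE (andP far_j).1) (negbTE (andP far_j).2).
- rewrite inE => /eqP ->; have lt_mn : m < n by lia.
  by exists (inl (Ordinal lt_mn)) => //; rewrite blockE /near /= eqxx.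
- rewrite blockE; case: ifP => near_x; first by right; rewrite inE.
  by left; apply/imsetP; exists (pidx x); rewrite // inE -negb_or -/m; apply/negbT.
Qed.

Section BoxedPartition.
Variables (J : part n) (boxedJ : boxed J).

Let tiJ : trivIset J. Proof. by case: boxedJ => /and3P []. Qed.
Let coverJ x : x \in cover J. Proof. by case: boxedJ => /setpart_cover. Qed.
Let in_block x : x \in pblock J x. Proof. by rewrite mem_pblock coverJ. Qed.

Lemma boxed_pblock_inr i : pblock J (inr i) = pblock J (inl i).
Proof.
case: boxedJ => _ fineJ _.
have := fineJ _ (pblock_mem (coverJ (inr i))) => /setP /(_ (inr i)).
rewrite in_block => /esym /bigcupP [_ /andP [/imsetP [j _ ->] /subsetP sub_j]].
rewrite !inE !pt_eqE => /eqP ij; apply/esym/(same_pblock tiJ).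
by apply: sub_j; rewrite ij !inE eqxx.
Qed.

Lemma boxed_pblock_inl (a b : 'I_n) :
  (pblock J (inl a) == pblock J (inl b)) =
  (block_index (merged J) a == block_index (merged J) b).
Proof.
wlog lab : a b / a <= b.
  move=> wlog_ab; case: (leqP a b) => [|/ltnW] lab; first exact: wlog_ab.
  by rewrite eq_sym [RHS]eq_sym; apply: wlog_ab.
apply/idP/(block_index_eqP _ lab) => [ab k /andP [ak kb] | merged_ab].
  have lt_k1n : k.+1 < n by apply: leq_trans (ltn_ord b).
  have lt_kn : k < n by apply: ltnW.
  case: boxedJ => _ _ intervalJ.
  have in_ab (c : 'I_n) : a <= c <= b -> inl c \in pblock J (inl a).
    move=> acb; apply: (intervalJ _ (pblock_mem (coverJ _)) a c b) => //.
    by rewrite (eqP ab).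
  apply/existsP; exists (Ordinal lt_kn); apply/existsP; exists (Ordinal lt_k1n).
  rewrite !eqxx /= (same_pblock tiJ (_ : inl (Ordinal lt_kn) \in pblock J (inl a))).
    by apply: in_ab => /=; lia.
  by apply: in_ab => /=; lia.
apply: (@ord_chain _ (fun c d => pblock J (inl c) == pblock J (inl d))) => //.
- by move=> ? ? ? /eqP -> /eqP ->.
move=> k k' ak k'b k'E.
have /existsP [c /existsP [d /and3P [/eqP ck /eqP dk]]] : merged J k.
  by apply: merged_ab; lia.
have -> : c = k by apply: val_inj.
have -> : d = k' by apply: val_inj; rewrite /= dk k'E.
by rewrite (eq_pblock _ tiJ (coverJ _)).
Qed.

Lemma boxed_box_partE : J = box_part n (merged J).
Proof.
case: boxedJ => setpartJ _ _; rewrite {1}(setpart_ker_pblock setpartJ).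
apply: eq_ker_part => x y.
have pblock_top z : pblock J z = pblock J (inl (pidx z)).
  by case: z => // i; rewrite boxed_pblock_inr.
by rewrite (pblock_top x) (pblock_top y) boxed_pblock_inl.
Qed.

End BoxedPartition.

End Boxed.

Section BRMonoid.
Variable n : nat.
Implicit Types (x y : part n * part n) (J : part n) (g h : 'I_n -> 'I_n).

Lemma brmul_diagram g h f f' :
  brmul (perm_part g, box_part n f) (perm_part h, box_part n f') =
  (perm_part (h \o g), box_part n (fun k => f k || f' k)).
Proof. by rewrite /brmul /= pmul_perm_part pmul_box_part. Qed.

Lemma BRE x : BR x -> exists g f, x = (perm_part g, box_part n f).
Proof.
case: x => x1 x2 [/= /in_SnE [g ->] boxed2 _].
by exists g, (merged x2); rewrite -boxed_box_partE.
Qed.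

Lemma BR_pone J : boxed J -> BR (pone n, J).
Proof.
move=> boxedJ; split=> //=; last by case: boxedJ.
rewrite pone_perm_part (@eq_perm_part _ id (1%g : {perm 'I_n})) => [|i].
  exact: in_Sn_perm_part.
by rewrite perm1.
Qed.

Lemma BR_perm_full (s : {perm 'I_n}) : BR (perm_part s, box_part n (fun=> true)).
Proof.
split; [exact: in_Sn_perm_part | exact: boxed_box_part | ].
exact/pfiner_full/ker_part_setpart.
Qed.

Lemma commute_all_perm_id g : 2 < n ->
  (forall (s : {perm 'I_n}) i, s (g i) = g (s i)) -> g =1 id.
Proof.
move=> n_gt2 comm_g i; apply/eqP/negPn/negP => gi_neq_i.
have /card_gt0P [k] : 0 < #|~: [set i; g i]|.
  by rewrite cardsCs setCK card_ord cards2; lia.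
rewrite !inE negb_or => /andP [k_neq_i k_neq_gi].
(* The transposition of [g i] and [k] fixes [i] but moves [g i]. *)
have := comm_g (tperm (g i) k) i; rewrite tpermL tpermD // 1?eq_sym //.
by move/eqP; rewrite (negbTE k_neq_gi).
Qed.

Lemma central_fst_pone x : 2 < n -> BR x ->
  (forall y, BR y -> brmul x y = brmul y x) -> x.1 = pone n.
Proof.
move=> n_gt2 /BRE [g [f ->]] central /=.
rewrite pone_perm_part; apply: eq_perm_part; apply: commute_all_perm_id => // s i.
have := central _ (BR_perm_full s); rewrite !brmul_diagram => -[/perm_part_inj comm _].
exact: comm.
Qed.

Lemma pone_central J y : boxed J -> BR y -> brmul (pone n, J) y = brmul y (pone n, J).
Proof.
move=> /boxed_box_partE -> /BRE [g [f ->]].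
rewrite pone_perm_part !brmul_diagram; congr pair.
by apply: eq_box_part => k _; rewrite orbC.
Qed.

Lemma center_BR x : 2 < n ->
  (BR x /\ forall y, BR y -> brmul x y = brmul y x) <->
  (exists J, boxed J /\ x = (pone n, J)).
Proof.
move=> n_gt2; split => [[BRx central] | [J [boxedJ ->]]].
  have := central_fst_pone n_gt2 BRx central.
  by case: x BRx {central} => x1 x2 [_ boxed2 _] /= ->; exists x2.
by split=> [|y]; [exact: BR_pone | exact: pone_central].
Qed.

Lemma foldr_egen s : all (fun i => 0 < i < n) s ->
  foldr (@brmul n) (brone n) [seq egen n i | i <- s] =
  (pone n, box_part n (fun k => k.+1 \in s)).
Proof.
elim: s => [_ | i s IH /= /andP [i_range s_range]] /=.
  by rewrite /brone pone_box_part; congr pair; apply: eq_box_part.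
rewrite IH // /brmul /egen /= {1 2}pone_perm_part pmul_perm_part -pone_perm_part.
rewrite bgen_box_part // pmul_box_part; congr pair; apply: eq_box_part => k _.
by rewrite in_cons; congr orb => /=; lia.
Qed.

Lemma boxed_generated x :
  (exists J, boxed J /\ x = (pone n, J)) <->
  (exists s, all (fun i => 0 < i < n) s /\
             x = foldr (@brmul n) (brone n) [seq egen n i | i <- s]).
Proof.
split=> [[J [boxedJ ->]] | [s [s_range ->]]]; last first.
  rewrite foldr_egen //; exists (box_part n (fun k => k.+1 \in s)).
  by split; first exact: boxed_box_part.
pose s := [seq k.+1 | k <- iota 0 n.-1 & merged J k].
have s_range : all (fun i => 0 < i < n) s.
  by apply/allP => i /mapP [k]; rewrite mem_filter mem_iota => /andP [_ ?] ->; lia.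
exists s; split; rewrite // foldr_egen // {1}(boxed_box_partE boxedJ).
congr pair; apply: eq_box_part => k lt_k.
by rewrite (mem_map succn_inj) mem_filter mem_iota /= lt_k andbT.
Qed.

End BRMonoid.

Section Compositions.
Implicit Types (b c : seq bool) (mu tau : seq nat).

(* The cuts of [comp_of_bits a b] sit at the [false] entries of [b]; the
   accumulator [a] counts points already added to the current part. *)
Fixpoint comp_of_bits (a : nat) b : seq nat :=
  match b with
  | [::] => [:: a.+1]
  | x :: b' => if x then comp_of_bits a.+1 b' else a.+1 :: comp_of_bits 0 b'
  end.

Lemma comp_of_bits_head b : exists h t, 0 < h /\ forall a, comp_of_bits a b = (a + h) :: t.
Proof.
elim: b => [|[] b [h [t [h_gt0 bE]]]] /=.
- by exists 1, [::]; split=> // a; rewrite addn1.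
- by exists h.+1, t; split=> // a; rewrite bE addSnnS.
- by exists 1, (comp_of_bits 0 b); split=> // a; rewrite addn1.
Qed.

Lemma comp_of_bits_pos a b : all (fun k => 0 < k) (comp_of_bits a b).
Proof. by elim: b a => [|[] b IH] a //=; rewrite IH. Qed.

Lemma sumn_comp_of_bits a b : sumn (comp_of_bits a b) = a + size b + 1.
Proof. by elim: b a => [|[] b IH] a /=; [lia | rewrite IH; lia ..]. Qed.

Lemma coarser_nil : coarser [::] [::].
Proof. by exists [::]. Qed.

Lemma coarser_nilE tau : coarser [::] tau -> tau = [::].
Proof. by case=> -[[_ _ ->] // | k r [/= /andP [k_gt0 _] sum0 _]]; lia. Qed.

Lemma coarser_cons m mu tau : coarser mu tau -> coarser (m :: mu) (m :: tau).
Proof.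
case=> r [r_pos r_sum ->]; exists (1 :: r); split => //=; first by rewrite r_sum.
by rewrite take0 drop0 addn0.
Qed.

Lemma coarser_merge m1 m2 mu t tau : coarser (m2 :: mu) (t :: tau) ->
  coarser (m1 :: m2 :: mu) ((m1 + t) :: tau).
Proof.
case=> [[|k r]] [//= /andP [_ r_pos] r_sum [tE ->]].
by exists (k.+1 :: r); split; rewrite //= -?tE //; lia.
Qed.

Lemma coarser_consE m mu tau : coarser (m :: mu) tau ->
  (exists tau', tau = m :: tau' /\ coarser mu tau') \/
  (exists t tau', tau = (m + t) :: tau' /\ coarser mu (t :: tau')).
Proof.
case=> r [+ + ->]; case: r => [|[|[|k] r]] //= r_pos r_sum.
  left; exists [seq sumn s | s <- reshape r mu].
  by rewrite take0 drop0 addn0; split=> //; exists r; split=> //; lia.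
right; do 2!eexists; split; first reflexivity.
by exists (k.+1 :: r); split => //=; lia.
Qed.

Lemma coarser_comp_of_bits a b c :
  all2 implb b c -> coarser (comp_of_bits a b) (comp_of_bits a c).
Proof.
elim: b a c => [|x b IH] a [|y c] //=; first by move=> _; apply/coarser_cons/coarser_nil.
case/andP; case: x; case: y => //= _ bc; [exact: IH | | exact/coarser_cons/IH].
have [h [t [_ cE]]] := comp_of_bits_head c; have [h' [t' [_ bE]]] := comp_of_bits_head b.
by have := IH 0 _ bc; rewrite cE bE !add0n cE => /(coarser_merge a.+1).
Qed.

Lemma coarser_comp_of_bitsE a b tau : coarser (comp_of_bits a b) tau ->
  exists2 c, size c = size b & all2 implb b c /\ tau = comp_of_bits a c.
Proof.
elim: b a tau => [|[] b IH] a tau /=.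
- case/coarser_consE => [[tau' [-> /coarser_nilE ->]] | [t [tau' [_ /coarser_nilE //]]]].
  by exists [::].
- by case/IH => c c_size [bc ->]; exists (true :: c); rewrite /= ?c_size.
case/coarser_consE => [[tau' [-> /IH [c c_size [bc ->]]]] | [t [tau' [-> /IH [c c_size [bc cE]]]]]].
  by exists (false :: c); rewrite /= ?c_size.
exists (true :: c); rewrite /= ?c_size //; split=> //.
have [h [t' [_ c0E]]] := comp_of_bits_head c.
by move: cE; rewrite c0E add0n => -[-> ->]; rewrite c0E addSnnS.
Qed.

Lemma comp_of_bits_inj a b c :
  size b = size c -> comp_of_bits a b = comp_of_bits a c -> b = c.
Proof.
elim: b a c => [|x b IH] a [|y c] //= [bc_size].
have [h [t [h_gt0 bE]]] := comp_of_bits_head b.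
have [h' [t' [h'_gt0 cE]]] := comp_of_bits_head c.
case: x; case: y => /=.
- by move=> /(IH _ _ bc_size) ->.
- by rewrite bE => -[]; lia.
- by rewrite cE => -[]; lia.
- by case=> /(IH _ _ bc_size) ->.
Qed.

Lemma comp_of_bits_nseq k a b :
  comp_of_bits a (nseq k true ++ b)%SEQ = comp_of_bits (a + k) b.
Proof. by elim: k a => [|k IH] a /=; rewrite ?addn0 // IH addnS. Qed.

Lemma comp_of_bits_surj mu : all (fun k => 0 < k) mu -> mu != [::] ->
  exists2 b, comp_of_bits 0 b = mu & size b = (sumn mu).-1.
Proof.
elim: mu => [//|m mu IH] /= /andP [m_gt0 mu_pos] _.
case: mu IH mu_pos => [|m2 mu] IH mu_pos.
  exists (nseq m.-1 true); last by rewrite size_nseq /=; lia.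
  by rewrite -[nseq _ _]cats0 comp_of_bits_nseq /=; congr [:: _]; lia.
have [b bE b_size] := IH mu_pos isT.
exists (nseq m.-1 true ++ false :: b)%SEQ.
  by rewrite comp_of_bits_nseq /= bE; congr cons; lia.
by rewrite size_cat size_nseq /= b_size; move: mu_pos => /= /andP [? _]; lia.
Qed.

Definition bits_or b c := [seq p.1 || p.2 | p <- zip b c].

Lemma bits_orl b c : size b = size c -> all2 implb b (bits_or b c).
Proof. by elim: b c => [|x b IH] [|y c] //= [/IH ->]; case: x. Qed.

Lemma bits_orr b c : size b = size c -> all2 implb c (bits_or b c).
Proof. by elim: b c => [|x b IH] [|y c] //= [/IH ->]; case: x; case: y. Qed.

Lemma bits_or_lub b c d : all2 implb b d -> all2 implb c d -> all2 implb (bits_or b c) d.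
Proof.
elim: b c d => [|x b IH] [|y c] [|z d] //= /andP [xz bd] /andP [yz cd].
by rewrite IH // andbT; case: x xz; case: y yz.
Qed.

Lemma is_join_comp_of_bits b c : size b = size c ->
  is_join (comp_of_bits 0 b) (comp_of_bits 0 c) (comp_of_bits 0 (bits_or b c)).
Proof.
move=> bc_size; split; [exact/coarser_comp_of_bits/bits_orl
                       | exact/coarser_comp_of_bits/bits_orr | ].
move=> tau /coarser_comp_of_bitsE [d1 d1_size [bd1 ->]].
case/coarser_comp_of_bitsE => d2 d2_size [cd2 d12].
have d1d2 : d1 = d2 by apply: (comp_of_bits_inj (a := 0)); rewrite ?d1_size ?d2_size.
by rewrite -d1d2 in cd2; apply/coarser_comp_of_bits/bits_or_lub.
Qed.

End Compositions.

Lemma eq_in_mkseq (T : Type) (f g : nat -> T) m :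
  (forall k, k < m -> f k = g k) -> mkseq f m = mkseq g m.
Proof. by move=> fg; apply/eq_in_map => k; rewrite mem_iota => /fg. Qed.

Lemma mkseq_bits_or f g m :
  bits_or (mkseq f m) (mkseq g m) = mkseq (fun k => f k || g k) m.
Proof. by rewrite /bits_or /mkseq zip_map -map_comp. Qed.

Section CompositionOfBox.
Variable n : nat.
Implicit Types J : part n.

Definition comp_of_box J : seq nat := comp_of_bits 0 (mkseq (merged J) n.-1).

Lemma comp_of_box_part f : comp_of_box (box_part n f) = comp_of_bits 0 (mkseq f n.-1).
Proof.
by rewrite /comp_of_box (eq_in_mkseq (g := f)) // => k lt_k; apply: merged_box_part; lia.
Qed.

Lemma composition_comp_of_box J : 0 < n -> composition n (comp_of_box J).
Proof.
by split; rewrite ?comp_of_bits_pos // sumn_comp_of_bits size_mkseq; lia.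
Qed.

Lemma comp_of_box_inj J J' : boxed J -> boxed J' ->
  comp_of_box J = comp_of_box J' -> J = J'.
Proof.
move=> /boxed_box_partE -> /boxed_box_partE ->; rewrite !comp_of_box_part.
move/comp_of_bits_inj; rewrite !size_mkseq => /(_ erefl) JJ'.
apply: eq_box_part => k lt_k.
by have := congr1 (nth false ^~ k) JJ'; rewrite /= !nth_mkseq.
Qed.

Lemma comp_of_box_surj mu : 0 < n -> composition n mu ->
  exists2 J, boxed J & comp_of_box J = mu.
Proof.
move=> n_gt0 [mu_pos mu_sum].
have [|b bE b_size] := comp_of_bits_surj mu_pos; first by apply: contraL n_gt0 => /eqP mu0; rewrite -mu_sum mu0.
exists (box_part n (nth false b)); first exact: boxed_box_part.
by rewrite comp_of_box_part -mu_sum -b_size mkseq_nth.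
Qed.

Lemma comp_of_box_join J J' : boxed J -> boxed J' ->
  is_join (comp_of_box J) (comp_of_box J') (comp_of_box (pmul J J')).
Proof.
move=> /boxed_box_partE -> /boxed_box_partE ->.
rewrite pmul_box_part !comp_of_box_part -mkseq_bits_or.
by apply: is_join_comp_of_bits; rewrite !size_mkseq.
Qed.

End CompositionOfBox.

Theorem proposition5p16 (n : nat) (hn : 3 <= n) :
  (* the center of BR(S_n) is {(1,J) | J boxed} *)
  (forall x : part n * part n,
      (BR x /\ forall y, BR y -> brmul x y = brmul y x) <->
      (exists J, boxed J /\ x = (pone n, J)))
  /\
  (* this set is the submonoid generated by e_1, ..., e_(n-1) *)
  (forall x : part n * part n,
      (exists J, boxed J /\ x = (pone n, J)) <->
      (exists s : seq nat, all (fun i => 0 < i < n) s /\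
                           x = foldr (@brmul n) (brone n) [seq egen n i | i <- s]))
  /\
  (* and it is isomorphic to the monoid C_n of compositions of n (with join) *)
  (exists phi : part n * part n -> seq nat,
      [/\ forall J, boxed J -> composition n (phi (pone n, J)),
          forall J J', boxed J -> boxed J' ->
            phi (pone n, J) = phi (pone n, J') -> J = J',
          forall mu, composition n mu -> exists J, boxed J /\ phi (pone n, J) = mu
        & forall J J', boxed J -> boxed J' ->
            is_join (phi (pone n, J)) (phi (pone n, J'))
                    (phi (brmul (pone n, J) (pone n, J')))]).
Proof.
have n_gt0 : 0 < n by apply: leq_trans hn.
split; first by move=> x; apply: center_BR.
split; first exact: boxed_generated.
exists (fun x => comp_of_box x.2); split=> /=.
- by move=> J _; apply: composition_comp_of_box.
- exact: comp_of_box_inj.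
- by move=> mu /(comp_of_box_surj n_gt0) [J]; exists J.
- exact: comp_of_box_join.
Qed.
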